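(* Assume $K_1\subseteq K_2\subseteq\cdots\subseteq K_n\subseteq\mathbb F_q$ are subfields, $d_i=|K_i|$, $n\ge 2$. Let $\delta\ge 2$, $s\in\{1,\dots,n\}$ with $r:=d_s-\delta+1\ge 1$, and let $d=\sum_{i=1}^k(d_i-1)+\ell$ with $0\le k<n$ and $0<\ell\le d_{k+1}-1$. If $W^{(1)}(\mathcal D^{(\delta,s)}_{\mathcal X}(d))=W^{(1)}(\mathcal C_{\mathcal X}(d))$, then at least one of the following holds: (i) $k+2\le n$ and $d_{k+2}\le d_s$; (ii) $d_s\le d_{k+1}$ and $0\le d_s-(d_{k+1}-\ell)<r$.
   Context: $\mathcal X=K_1\times\cdots\times K_n=\{\boldsymbol\alpha_1,\dots,\boldsymbol\alpha_m\}$ (fixed enumeration), $m=\prod d_i$; $\Psi:\mathbb F_q[X_1,\dots,X_n]\to\mathbb F_q^m$, $f\mapsto(f(\boldsymbol\alpha_1),\dots,f(\boldsymbol\alpha_m))$. For $d\ge 0$, $\mathbb F_q[X_1,\dots,X_n]_{\le d}$ is the space of polynomials of degree at most $d$ together with $0$; the affine cartesian code is $\mathcal C_{\mathcal X}(d)=\Psi(\mathbb F_q[X_1,\dots,X_n]_{\le d})$. $\mathcal P^{(\delta,s)}_d$ is the set of $f\in\mathbb F_q[X_1,\dots,X_n]_{\le d}$ with $\deg_{X_s}f<d_s-\delta+1$, together with $0$, and $\mathcal D^{(\delta,s)}_{\mathcal X}(d)=\Psi(\mathcal P^{(\delta,s)}_d)$. $W^{(1)}(C)$ is the minimum Hamming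 distance of a linear code $C$. *)

From HB Require Import structures.
From mathcomp Require Import all_boot all_order all_algebra all_field.
From mathcomp Require Import mpoly.
Set Implicit Arguments. Unset Strict Implicit. Unset Printing Implicit Defensive.
Import Order.TTheory GRing.Theory.
Local Open Scope ring_scope.

Definition is_subfield (F : finFieldType) (K : {set F}) : Prop :=
  [/\ (0 : F) \in K, (1 : F) \in K,
      (forall x y, x \in K -> y \in K -> x - y \in K),
      (forall x y, x \in K -> y \in K -> x * y \in K) &
      (forall x, x \in K -> x^-1 \in K)].

Definition grid (F : finFieldType) (n : nat) (K : 'I_n -> {set F})
  : {set {ffun 'I_n -> F}} := [set x : {ffun 'I_n -> F} | [forall i, x i \in K i]].

Definition Psi (F : finFieldType) (n : nat) (K : 'I_n -> {set F})
  (f : {mpoly F[n]}) : 'rV[F]_#|grid K| :=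
  \row_(j < #|grid K|) f.@[(enum_val j : {ffun 'I_n -> F})].

Definition hweight (F : fieldType) (m : nat) (v : 'rV[F]_m) : nat :=
  #|[set j : 'I_m | v 0 j != 0]|.

(* degree in the variable X_s (0 for the zero polynomial) *)
Definition degX (F : ringType) (n : nat) (s : 'I_n) (f : {mpoly F[n]}) : nat :=
  \max_(m <- msupp f) m s.

(* F[X]_{<= d}: polynomials of total degree <= d, together with 0 *)
Definition Pdeg (F : ringType) (n d : nat) (f : {mpoly F[n]}) : Prop :=
  (msize f <= d.+1)%N.

Definition Pdelta (F : finFieldType) (n : nat) (K : 'I_n -> {set F})
  (delta : nat) (s : 'I_n) (d : nat) (f : {mpoly F[n]}) : Prop :=
  Pdeg d f /\ (f = 0 \/ (degX s f < #|K s| - delta + 1)%N).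

Definition code (F : finFieldType) (n : nat) (K : 'I_n -> {set F})
  (P : {mpoly F[n]} -> Prop) (c : 'rV[F]_#|grid K|) : Prop :=
  exists f, P f /\ Psi K f = c.

Definition min_dist (F : fieldType) (m : nat) (C : 'rV[F]_m -> Prop) (w : nat)
  : Prop :=
  (exists c, [/\ C c, c != 0 & hweight c = w]) /\
  (forall c, C c -> c != 0 -> (w <= hweight c)%N).

From HB Require Import structures.
From mathcomp Require Import all_boot all_order all_algebra all_field.
From mathcomp Require Import mpoly.
From mathcomp Require Import zify.
Set Implicit Arguments. Unset Strict Implicit. Unset Printing Implicit Defensive.
Import Order.TTheory GRing.Theory.

(* Theorem 10: if the minimum distances of D_X^(delta,s)(d) and C_X(d)
   coincide, then (i) or (ii) holds.  Write a_i = |K_i|; these are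
   nondecreasing, at least 2, and x ^+ a_i = x on K_i.

   1. Footprint bound (FootprintBound, mpoly_footprint): a polynomial of total
      degree <= d that does not vanish on the grid has at least
      \prod (a_i - u_i) nonzeros for a profile u with u_i <= a_i - 1,
      u_i <= deg_{X_i} f and \sum u_i <= d.  Induction on the variables:
      reduce exponents modulo X_j^{a_j} = X_j, take the top nonvanishing
      coefficient in X_j and count roots along the lines in direction j.
   2. A word of C_X(d) of weight (a_k - l) \prod_(i > k) a_i (ProfileWord).
   3. Arithmetic (ProfileComparison): a greedy argument shows that, when both
      (i) and (ii) fail, every profile with the extra constraint
      u_s <= a_s - delta (forced by deg_{X_s} f < a_s - delta + 1) gives
      \prod (a_i - u_i) > (a_k - l) \prod_(i > k) a_i.
   Hence a minimum weight word of D is heavier than a word of C, which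
   contradicts the equality of the minimum distances. *)

(* For a nondecreasing list it is the least value of \prod (x_i - u_i)
   subject to u_i <= x_i - 1 and \sum u_i <= e (lemma greedy_prod_le). *)
Fixpoint greedy_prod (xs : seq nat) (e : nat) : nat :=
  if xs is x :: xs' then
    if e <= x.-1 then (x - e) * \prod_(y <- xs') y else greedy_prod xs' (e - x.-1)
  else 1.

Lemma greedy_prod0 xs : greedy_prod xs 0 = \prod_(y <- xs) y.
Proof. by case: xs => [|x xs] /=; rewrite ?big_nil // big_cons subn0. Qed.

Lemma greedy_prod_shift xs e x : all (fun y => x <= y.-1) xs ->
  greedy_prod xs e <= x.+1 * greedy_prod xs (e + x).
Proof.
elim: xs e => [|y xs IH] e /=; first by rewrite muln1.
move=> /andP[xy xxs].
case: (leqP (e + x) y.-1) => ex_fits.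
  have -> : e <= y.-1 by lia.
  rewrite mulnA leq_mul2r; apply/orP; right; nia.
case: (leqP e y.-1) => e_fits; last by rewrite (_ : e + x - y.-1 = e - y.-1 + x) ?IH //; lia.
case: xs xxs {IH} => [|z xs] /= xxs; first by rewrite !big_nil !muln1; lia.
move/andP: xxs => [xz _].
have -> : e + x - y.-1 <= z.-1 by lia.
rewrite big_cons mulnA mulnA leq_mul2r; apply/orP; right; nia.
Qed.

Lemma greedy_prod_le (idx : seq nat) (a u : nat -> nat) e :
  pairwise (fun i j => a i <= a j) idx -> all (fun i => 0 < a i) idx ->
  all (fun i => u i <= (a i).-1) idx -> \sum_(i <- idx) u i <= e ->
  greedy_prod (map a idx) e <= \prod_(i <- idx) (a i - u i).
Proof.
elim: idx e => [|i idx IH] e /=; first by move=> *; rewrite big_nil.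
move=> /andP[a_i_min a_sorted] /andP[ai_gt0 a_pos] /andP[ui_le u_le].
rewrite !big_cons => sum_le.
have IHe : greedy_prod (map a idx) (e - u i) <= \prod_(j <- idx) (a j - u j).
  by apply: IH => //; lia.
case: (leqP e (a i).-1) => e_small.
  case: idx a_i_min a_pos IHe sum_le {IH a_sorted u_le} => [|j idx] /=.
    by rewrite !big_nil !muln1 => _ _ _ ?; lia.
  move=> /andP[aij _] /andP[aj_gt0 _].
  have -> : e - u i <= (a j).-1 by lia.
  move=> IHe sum_le; apply: leq_trans (leq_mul (leqnn (a i - u i)) IHe).
  rewrite big_cons mulnA mulnA leq_mul2r; apply/orP; right; nia.
have big_entries : all (fun y => (a i).-1 - u i <= y.-1) (map a idx).
  by rewrite all_map; apply/allP => j /(allP a_i_min) /=; lia.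
apply: leq_trans (greedy_prod_shift (e - (a i).-1) big_entries) _.
rewrite (_ : e - (a i).-1 + ((a i).-1 - u i) = e - u i); last by lia.
by rewrite (_ : ((a i).-1 - u i).+1 = a i - u i) ?leq_mul //; lia.
Qed.

Lemma greedy_prod_cat xs ys e : all (leq 2) xs ->
  greedy_prod (xs ++ ys) (\sum_(y <- xs) y.-1 + e) = greedy_prod ys e.
Proof.
elim: xs => [|x xs IH] /=; first by rewrite big_nil.
move=> /andP[x_ge2 xs_ge2]; rewrite big_cons.
case: (leqP (x.-1 + \sum_(y <- xs) y.-1 + e) x.-1) => h; last first.
  by rewrite -IH //; congr greedy_prod; lia.
have xs0 : \sum_(y <- xs) y.-1 = 0 by lia.
case: xs xs_ge2 {IH} xs0 h => [|z xs] /=; last by rewrite big_cons => /andP[] ? _; lia.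
by move=> _ _ h; rewrite (_ : e = 0) ?greedy_prod0; lia.
Qed.

(* The two numerical comparisons behind the cases s < k and s = k below. *)
Lemma exchange_lt_spread x x' B : 1 <= x' <= x -> x + 2 <= B ->
  (x - x' + 1) * B < (x + 1) * (B - x').
Proof.
move=> /andP[x'_ge1 x'_le] B_ge.
have [e xe] : exists e, x = x' + e by exists (x - x'); lia.
have [c Bc] : exists c, B = x + 2 + c by exists (B - (x + 2)); lia.
subst B x.
have -> : x' + e - x' + 1 = e + 1 by lia.
have -> : x' + e + 2 + c - x' = e + 2 + c by lia.
nia.
Qed.

Lemma exchange_lt_same y v l B : v < l -> l < y -> y < B ->
  (y - l) * B < (y - v) * (B - (l - v)).
Proof.
move=> vl ly yB.
have [e le] : exists e, l = v + 1 + e by exists (l - v - 1); lia.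
have [f yf] : exists f, y = l + 1 + f by exists (y - l - 1); lia.
have [c Bc] : exists c, B = y + 1 + c by exists (B - y - 1); lia.
subst B y l.
have -> : v + 1 + e + 1 + f - (v + 1 + e) = f + 1 by lia.
have -> : v + 1 + e + 1 + f - v = e + f + 2 by lia.
have -> : v + 1 + e + 1 + f + 1 + c - (v + 1 + e - v) = v + f + c + 2 by lia.
nia.
Qed.

Lemma iota_split k n : k < n -> iota 0 n = iota 0 k ++ k :: iota k.+1 (n - k.+1).
Proof.
move=> kn; have {1}-> : n = k + (1 + (n - k.+1)) by lia.
by rewrite iotaD iotaD add0n addn1.
Qed.

(* The weight profile of the candidate minimal word of C_X(d): coordinates
   before k are frozen, l values are removed at k, later ones are free. *)
Lemma profile_prod_eq (a : nat -> nat) n k l : k < n ->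
  \prod_(0 <= i < n) (if i < k then 1 else if i == k then a k - l else a i)
  = (a k - l) * \prod_(i <- iota k.+1 (n - k.+1)) a i.
Proof.
move=> kn; rewrite /index_iota subn0 (iota_split kn) big_cat big_cons.
rewrite big1_seq => [|i /andP[_]]; last by rewrite mem_iota => /andP[_ ->].
rewrite ltnn eqxx /= mul1n; congr (_ * _); apply: eq_big_seq => i.
by rewrite mem_iota => /andP[ki _]; rewrite ltnNge ltnW //= gtn_eqF.
Qed.

(* Numerical heart of the theorem.  a_0 <= ... <= a_{n-1} are the sizes of
   the fields K_i and u a degree profile with \sum u_i <= d and the extra
   constraint u_s <= a_s - delta coming from the X_s-degree bound.  If neither
   alternative (i) nor (ii) holds, the lower bound \prod (a_i - u_i) strictly
   exceeds the weight (a_k - l) \prod_(i > k) a_i of the minimal word. *)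
Section ProfileComparison.
Variables (a u : nat -> nat) (n k s l delta : nat).
Hypothesis a_mono : forall i j, i <= j -> j < n -> a i <= a j.
Hypothesis a_ge2 : forall i, i < n -> 2 <= a i.
Hypotheses (k_lt_n : k < n) (s_lt_n : s < n).
Hypotheses (l_gt0 : 0 < l) (l_le : l <= (a k).-1).
Hypotheses (delta_ge2 : 2 <= delta) (delta_le : delta <= a s).
Hypothesis not_i : ~ (k.+1 < n /\ a k.+1 <= a s).
Hypothesis not_ii :
  ~ [/\ a s <= a k, a k - l <= a s & a s - (a k - l) < a s - delta + 1].
Hypothesis u_le : forall i, i < n -> u i <= (a i).-1.
Hypothesis us_le : u s <= a s - delta.

Let tail := iota k.+1 (n - k.+1).
Let budget := \sum_(0 <= i < k) (a i).-1 + l.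

(* Since K_{k+1} is strictly larger than K_s, s cannot lie after k. *)
Lemma s_le_k : s <= k.
Proof.
rewrite leqNgt; apply/negP => ks; apply: not_i; split; first by lia.
by apply: a_mono => //; lia.
Qed.

Lemma tail_prod_gt0 r : all (fun i => i < n) r -> 0 < \prod_(i <- r) a i.
Proof. by move=> rn; rewrite big_seq; apply: prodn_cond_gt0 => i /(allP rn)/a_ge2; lia. Qed.

Lemma tail_cases : (n = k.+1 /\ tail = [::]) \/
  [/\ k.+1 < n, a s < a k.+1 & tail = k.+1 :: iota k.+2 (n - k.+2)].
Proof.
case: (ltngtP k.+1 n) => [kn1|nk|nk]; [right|lia|left]; last by rewrite /tail -nk subnn.
split=> //; first by rewrite ltnNge; apply/negP => ?; apply: not_i.
by rewrite /tail (_ : n - k.+1 = (n - k.+2).+1) //; lia.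
Qed.

(* Case s < k: after the frozen coordinates other than s are used up, the
   remaining budget x + l (x = a_s - 1 - u_s >= 1) falls on coordinate k and
   possibly k + 1. *)
Lemma target_lt_greedy_lt (x : nat) : s < k -> x = (a s).-1 - u s ->
  (a k - l) * \prod_(i <- tail) a i < x.+1 * greedy_prod (a k :: map a tail) (x + l).
Proof.
move=> sk xE; have a_s2 := a_ge2 s_lt_n; have a_k2 := a_ge2 k_lt_n.
have a_sk : a s <= a k by apply: a_mono; lia.
have tail_n : all (fun i => i < n) tail by apply/allP => i; rewrite mem_iota; lia.
rewrite /=; case: (leqP (x + l) (a k).-1) => fits.
  have m_ge2 : 2 <= a k - (x + l).
    rewrite leqNgt; apply/negP => m_small; apply: not_ii; split => //; lia.
  rewrite big_map mulnA ltn_pmul2r ?tail_prod_gt0 //; nia.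
case: tail_cases => [[_ ->]|[kn1 as_lt ->]] /=; first by rewrite big_nil; lia.
have spill : x + l - (a k).-1 <= (a k.+1).-1 by lia.
rewrite spill !big_cons big_map mulnA mulnA ltn_pmul2r; last first.
  by apply: tail_prod_gt0; apply/allP => i; rewrite mem_iota; lia.
rewrite (_ : a k - l = x - (x + l - (a k).-1) + 1); last by lia.
by rewrite -(addn1 x); apply: exchange_lt_spread; lia.
Qed.

(* Case s = k: the negation of (ii) forces u_k < l, and the leftover budget
   l - u_k falls on coordinate k + 1. *)
Lemma u_k_lt_l : s = k -> u k < l.
Proof.
move=> sk; have uk_le : u k <= a k - delta by rewrite -sk.
by rewrite ltnNge; apply/negP => ?; apply: not_ii; rewrite sk; split; lia.
Qed.

Lemma target_lt_greedy_eq : s = k ->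
  (a k - l) * \prod_(i <- tail) a i < (a k - u k) * greedy_prod (map a tail) (l - u k).
Proof.
move=> sk; have uk_lt := u_k_lt_l sk; have a_k2 := a_ge2 k_lt_n.
case: tail_cases => [[_ ->]|[kn1 ak_lt ->]] /=; first by rewrite big_nil; lia.
have fits : l - u k <= (a k.+1).-1 by move: ak_lt; rewrite sk; lia.
rewrite fits !big_cons big_map mulnA mulnA ltn_pmul2r; last first.
  by apply: tail_prod_gt0; apply/allP => i; rewrite mem_iota; lia.
by apply: exchange_lt_same; move: ak_lt; rewrite sk; lia.
Qed.

Lemma prod_ge_greedy_without_s : \sum_(0 <= i < n) u i <= budget ->
  (a s - u s) * greedy_prod [seq a i | i <- [seq i <- iota 0 n | i != s]] (budget - u s)
  <= \prod_(0 <= i < n) (a i - u i).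
Proof.
move=> sum_le; have s_in : s \in iota 0 n by rewrite mem_iota.
rewrite /index_iota subn0 (bigD1_seq s) ?iota_uniq //= -big_filter leq_mul //.
have in_n : all (fun i => i < n) [seq i <- iota 0 n | i != s].
  by apply/allP => i; rewrite mem_filter mem_iota => /andP[_ /andP[_]].
apply: greedy_prod_le.
- apply/pairwise_filter/(sub_in_pairwise (P := fun i => i < n) (r := ltn)).
  + by move=> i j i_n j_n /= ij; apply: a_mono => //; lia.
  + by apply/allP => i; rewrite mem_iota.
  + by rewrite -sorted_pairwise ?iota_ltn_sorted //; apply: ltn_trans.
- by apply/allP => i /(allP in_n) /a_ge2; lia.
- by apply/allP => i /(allP in_n) /u_le.
- move: sum_le; rewrite big_filter /index_iota subn0 (bigD1_seq s) ?iota_uniq //=; lia.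
Qed.

Theorem profile_prod_lt : \sum_(0 <= i < n) u i <= budget ->
  \prod_(0 <= i < n) (if i < k then 1 else if i == k then a k - l else a i)
  < \prod_(0 <= i < n) (a i - u i).
Proof.
move=> sum_le; rewrite profile_prod_eq //; apply: leq_trans (prod_ge_greedy_without_s sum_le).
have frozen_ge2 : all (leq 2) [seq a i | i <- iota 0 k].
  by rewrite all_map; apply/allP => i; rewrite mem_iota => /andP[_ ?] /=; apply: a_ge2; lia.
rewrite (iota_split k_lt_n) filter_cat /= (all_filterP (_ : all (predC1 s) tail)); last first.
  by apply/allP => i; rewrite mem_iota => /andP[? _] /=; have := s_le_k; lia.
case: (ltngtP s k) s_le_k => // [sk|sk] _.
- have s_in : s \in iota 0 k by rewrite mem_iota.
  set frozen := [seq a i | i <- [seq i <- iota 0 k | i != s]].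
  have budgetE : budget - u s = \sum_(y <- frozen) y.-1 + ((a s).-1 - u s + l).
    rewrite /budget big_map big_filter /index_iota subn0 (bigD1_seq s) ?iota_uniq //=.
    by have := a_ge2 s_lt_n; lia.
  rewrite map_cat budgetE greedy_prod_cat; last first.
    by apply/allP => y /mapP[i]; rewrite mem_filter => /andP[_ i_in] ->;
      apply: (allP frozen_ge2); apply: map_f.
  rewrite (_ : a s - u s = ((a s).-1 - u s).+1); last by have := a_ge2 s_lt_n; lia.
  exact: target_lt_greedy_lt.
- rewrite sk (_ : [seq i <- iota 0 k | i != k] = iota 0 k); last first.
    apply/all_filterP/allP => i; rewrite mem_iota => /andP[_ ik].
    by rewrite neq_ltn ik.
  have budgetE : budget - u k = \sum_(y <- [seq a i | i <- iota 0 k]) y.-1 + (l - u k).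
    by rewrite /budget big_map /index_iota subn0; have := u_k_lt_l sk; lia.
  by rewrite map_cat budgetE greedy_prod_cat //; apply: target_lt_greedy_eq.
Qed.
End ProfileComparison.

Local Open Scope ring_scope.

Lemma subfield_card_ge2 (F : finFieldType) (K : {set F}) : is_subfield K -> (2 <= #|K|)%N.
Proof.
case=> K0 K1 _ _ _.
by rewrite (cardsD1 0) K0 (cardsD1 1) !inE K1 oner_eq0.
Qed.

Lemma subfield_expE (F : finFieldType) (K : {set F}) : is_subfield K ->
  forall x, x \in K -> x ^+ #|K| = x.
Proof.
move=> K_sub x xK; have K_ge2 := subfield_card_ge2 K_sub.
case: K_sub => K0 _ _ K_mul K_inv.
have [->|x_neq0] := eqVneq x 0; first by rewrite expr0n; case: #|K| K_ge2.
set Ks := K :\ 0.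
have Ks_mul : {in Ks &, forall y z, y * z \in Ks}.
  move=> y z; rewrite !inE => /andP[y0 yK] /andP[z0 zK].
  by rewrite mulf_eq0 negb_or y0 z0 K_mul.
have xKs : x \in Ks by rewrite !inE x_neq0.
have xVKs : x^-1 \in Ks by rewrite !inE invr_eq0 x_neq0 K_inv.
have P_neq0 : \prod_(y in Ks) y != 0 by apply/prodf_neq0 => y; rewrite !inE => /andP[].
have shift : \prod_(y in Ks) (y * x) = \prod_(y in Ks) y.
  rewrite [RHS](reindex_inj (mulIf x_neq0)) /=; apply: eq_bigl => y.
  apply/idP/idP => [yKs|/Ks_mul/(_ xVKs)]; first exact: Ks_mul yKs xKs.
  by rewrite -mulrA mulfV // mulr1.
rewrite big_split /= prodr_const in shift.
have x_pow : x ^+ #|Ks| = 1 by apply: (mulIf P_neq0); rewrite mul1r mulrC.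
by rewrite (cardsD1 0) K0 exprS x_pow mulr1.
Qed.

(* Exponent reduction modulo X^a = X: the representative of e in
   {0, ..., a - 1} with y ^+ e = y ^+ reduce_exp a e whenever y ^+ a = y. *)
Definition reduce_exp (a e : nat) : nat := if e is 0 then 0 else (e.-1 %% a.-1).+1.

Lemma reduce_exp_le a e : (reduce_exp a e <= e)%N.
Proof. by case: e => //= e; rewrite ltnS leq_mod. Qed.

Lemma reduce_exp_lt a e : (2 <= a)%N -> (reduce_exp a e < a)%N.
Proof.
move=> a_ge2; case: e => [|e] /=; first lia.
have : (e %% a.-1 < a.-1)%N by rewrite ltn_pmod //; lia.
lia.
Qed.

Lemma expr_reduce (R : pzRingType) (a : nat) (y : R) : (2 <= a)%N -> y ^+ a = y ->
  forall e, y ^+ e = y ^+ reduce_exp a e.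
Proof.
move=> a_ge2 ya [|e] //=.
have period t : y ^+ (t.+1 + a.-1) = y ^+ t.+1.
  by rewrite addSnnS prednK ?exprD ?ya -?exprSr //; lia.
rewrite {1}(divn_eq e a.-1); elim: (e %/ a.-1)%N => [|q IH]; first by rewrite mul0n add0n.
by rewrite mulSn -addnA addnC -addSn period.
Qed.

(* A polynomial in n variables is handled as a list of terms (coefficient,
   exponent vector); [eval_terms L x] is its value at x. Lists give direct
   access to the regrouping of terms by the power of one variable. *)
Notation term F n := (F * {ffun 'I_n -> nat})%type.

Definition eval_terms (R : pzRingType) n (L : seq (term R n)) (x : 'I_n -> R) : R :=
  \sum_(p <- L) p.1 * \prod_(i < n) x i ^+ p.2 i.

(* The terms of L whose X_j-exponent reduces to t modulo X_j^a = X_j, with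
   the variable X_j removed: the coefficient of X_j^t in the reduced form. *)
Definition coeff_terms (R : pzRingType) n (L : seq (term R n)) (j : 'I_n) (a t : nat)
  : seq (term R n) :=
  [seq ((p.1, [ffun i => if i == j then 0%N else p.2 i]) : term R n)
  | p : term R n <- L & reduce_exp a (p.2 j) == t].

Definition set_coord (T : Type) n (x : {ffun 'I_n -> T}) (j : 'I_n) (y : T)
  : {ffun 'I_n -> T} := [ffun i => if i == j then y else x i].

Lemma eval_terms_nil (R : pzRingType) n (x : 'I_n -> R) : eval_terms [::] x = 0.
Proof. by rewrite /eval_terms big_nil. Qed.

Lemma eval_terms_free (R : pzRingType) n (L : seq (term R n)) (j : 'I_n) (x x' : 'I_n -> R) :
  all (fun p : term R n => p.2 j == 0%N) L ->
  (forall i, i != j -> x i = x' i) -> eval_terms L x = eval_terms L x'.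
Proof.
move=> L_free xx'; apply: eq_big_seq => p pL; congr (_ * _); apply: eq_bigr => i _.
case: (eqVneq i j) => [->|ij]; last by rewrite xx'.
by rewrite (eqP (allP L_free p pL)) !expr0.
Qed.

Lemma eval_terms_split (R : comPzRingType) n (L : seq (term R n)) (j : 'I_n) a
  (x : 'I_n -> R) : (2 <= a)%N -> x j ^+ a = x j ->
  eval_terms L x = \sum_(t < a) eval_terms (coeff_terms L j a t) x * x j ^+ t.
Proof.
move=> a_ge2 xja.
under eq_bigr => t _ do rewrite /eval_terms big_map big_filter mulr_suml big_mkcond.
rewrite exchange_big /=; apply: eq_bigr => p _.
rewrite (bigD1 (Ordinal (reduce_exp_lt (p.2 j) a_ge2))) //= eqxx.
rewrite [X in _ = _ + X]big1 => [|t t_neq]; last first.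
  by case: ifP => // /eqP pt; case/eqP: t_neq; apply: val_inj; rewrite /= pt.
rewrite addr0 -mulrA; congr (_ * _).
rewrite [LHS](bigD1 j) // [X in _ = X * _](bigD1 j) //= ffunE eqxx expr0 mul1r mulrC.
congr (_ * _); last exact: expr_reduce.
by apply: eq_bigr => i ij; rewrite ffunE (negbTE ij).
Qed.

Lemma poly_nonzeros_ge (F : finFieldType) (Kj : {set F}) (E : nat -> F) ts (g : F -> F) :
  E ts != 0 -> (forall y, y \in Kj -> g y = \sum_(t < ts.+1) E t * y ^+ t) ->
  (#|Kj| - ts <= #|[set y in Kj | g y != 0%R]|)%N.
Proof.
move=> Ets_neq0 gE.
set p := \poly_(t < ts.+1) E t.
have size_p : size p = ts.+1 by rewrite size_poly_eq.
have p_neq0 : p != 0 by rewrite -size_poly_eq0 size_p.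
set Z := [set y | root p y].
have few_roots : (#|Kj :&: Z| <= ts)%N.
  rewrite cardE -ltnS -size_p; apply: max_poly_roots => //; last exact: enum_uniq.
  by apply/allP => y; rewrite mem_enum !inE => /andP[].
have -> : [set y in Kj | g y != 0] = Kj :\: Z.
  apply/setP => y; rewrite !inE; case yK: (y \in Kj); rewrite ?andbF //=.
  by rewrite andbT gE // /root horner_poly.
by have := cardsID Z Kj; lia.
Qed.

Lemma double_count_lines (T : finType) n (G S : {set {ffun 'I_n -> T}}) (Kj : {set T})
  (j : 'I_n) (P : pred {ffun 'I_n -> T}) c :
  S \subset G -> (forall x y, x \in G -> y \in Kj -> set_coord x j y \in G) ->
  (forall x, x \in G -> x j \in Kj) ->
  (forall x, x \in S -> c <= #|[set y in Kj | P (set_coord x j y)]|)%N ->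
  (c * #|S| <= #|[set z in G | P z]| * #|Kj|)%N.
Proof.
move=> SG G_line G_j line_count.
set Q := [set q : {ffun 'I_n -> T} * T | [&& q.1 \in S, q.2 \in Kj & P (set_coord q.1 j q.2)]].
have Q_ge : (c * #|S| <= #|Q|)%N.
  rewrite mulnC -sum_nat_const.
  apply: (@leq_trans (\sum_(x in S) #|[set y in Kj | P (set_coord x j y)]|));
    first exact: leq_sum.
  rewrite -sum1_card (eq_bigl (fun q => [&& q.1 \in S, q.2 \in Kj & P (set_coord q.1 j q.2)]));
    last by move=> q; rewrite inE.
  rewrite -(pair_big_dep (fun x => x \in S) (fun x y => (y \in Kj) && P (set_coord x j y))
       (fun _ _ => 1%N)) /=.
  by apply: leq_sum => x _; rewrite -sum1_card; apply: eq_leq; apply: eq_bigl => y; rewrite inE.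
pose phi (q : {ffun 'I_n -> T} * T) := (set_coord q.1 j q.2, q.1 j).
have phi_inj : injective phi.
  move=> [x y] [x' y'] [/ffunP xx' xj]; have := xx' j; rewrite !ffunE eqxx => yy'.
  congr pair => //; apply/ffunP => i; have := xx' i; rewrite !ffunE.
  by case: (eqVneq i j) => [->|].
apply: leq_trans Q_ge _; rewrite -cardsX -(card_imset Q phi_inj); apply: subset_leq_card.
apply/subsetP => z /imsetP[[x y] + ->]; rewrite !inE /= => /and3P[xS yK Pxy].
by rewrite Pxy G_line ?G_j // (subsetP SG).
Qed.

Lemma card_box (T : finType) n (A : 'I_n -> {set T}) :
  #|[set x : {ffun 'I_n -> T} | [forall i, x i \in A i]]| = (\prod_i #|A i|)%N.
Proof.
have -> : #|[set x : {ffun 'I_n -> T} | [forall i, x i \in A i]]| =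
   #|family (fun i => mem (A i))|.
  by apply: eq_card => x; rewrite inE; apply/forallP/familyP => h i; exact: h.
by rewrite card_family foldrE big_map big_enum.
Qed.

Definition vars_below (R : Type) n m (L : seq (term R n)) : bool :=
  all (fun p : term R n => [forall i : 'I_n, (m <= i)%N ==> (p.2 i == 0%N)]) L.

Definition total_deg_le (R : Type) n d (L : seq (term R n)) : bool :=
  all (fun p : term R n => (\sum_i p.2 i <= d)%N) L.

Definition exps_le (R : Type) n (B : 'I_n -> nat) (L : seq (term R n)) : bool :=
  all (fun p : term R n => [forall i, (p.2 i <= B i)%N]) L.

Section CoeffTerms.
Variables (R : pzRingType) (n : nat) (L : seq (term R n)) (j : 'I_n) (a t : nat).

Lemma coeff_termsP q : q \in coeff_terms L j a t ->
  exists2 p, p \in L &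
    reduce_exp a (p.2 j) = t /\ q = (p.1, [ffun i => if i == j then 0%N else p.2 i]).
Proof. by case/mapP=> p; rewrite mem_filter => /andP[/eqP pt pL] ->; exists p. Qed.

Lemma coeff_terms_free : all (fun q : term R n => q.2 j == 0%N) (coeff_terms L j a t).
Proof. by apply/allP => q /coeff_termsP[p _ [_ ->]] /=; rewrite ffunE eqxx. Qed.

Lemma coeff_terms_vars m : val j = m -> vars_below m.+1 L -> vars_below m (coeff_terms L j a t).
Proof.
move=> jm L_vars; apply/allP => q /coeff_termsP[p pL [_ ->]]; apply/forallP => i /=.
rewrite ffunE; case: (eqVneq i j) => [_|ij]; first by rewrite implybT.
apply/implyP => mi.
have mi' : (m < i)%N by rewrite ltn_neqAle mi andbT -jm; apply: contraNneq ij => /val_inj ->.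
by have /forallP/(_ i) := allP L_vars p pL; rewrite mi'.
Qed.

Lemma coeff_terms_exp q : q \in coeff_terms L j a t -> exists2 p, p \in L & (t <= p.2 j)%N.
Proof. by case/coeff_termsP=> p pL [<- _]; exists p => //; apply: reduce_exp_le. Qed.

Lemma coeff_terms_deg d : total_deg_le d L -> total_deg_le (d - t) (coeff_terms L j a t).
Proof.
move=> L_deg; apply/allP => q /coeff_termsP[p pL [pt ->]] /=.
have := reduce_exp_le a (p.2 j); rewrite pt => tp.
have := allP L_deg p pL; rewrite /= (bigD1 j) //= => p_deg.
rewrite (bigD1 j) //= ffunE eqxx add0n.
rewrite (eq_bigr (fun i => p.2 i)) => [|i ij]; last by rewrite ffunE (negbTE ij).
have td : (t <= d)%N by apply: leq_trans tp (leq_trans (leq_addr _ _) p_deg).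
by rewrite leq_subRL // (leq_trans _ p_deg) // leq_add2r.
Qed.

Lemma coeff_terms_exps B : exps_le B L -> exps_le B (coeff_terms L j a t).
Proof.
move=> L_exps; apply/allP => q /coeff_termsP[p pL [_ ->]]; apply/forallP => i /=.
by rewrite ffunE; case: eqVneq => // _; apply: (forallP (allP L_exps p pL) i).
Qed.
End CoeffTerms.

(* Induction on the variables: L is
   regrouped by powers of the last variable X_j, and the top nonvanishing
   coefficient is handled by induction and a root count along X_j. *)
Section FootprintBound.
Variables (F : finFieldType) (n : nat) (K : 'I_n -> {set F}).
Hypothesis K_exp : forall i x, x \in K i -> x ^+ #|K i| = x.
Hypothesis K_ge2 : forall i, (2 <= #|K i|)%N.

Lemma grid_coord x i : x \in grid K -> x i \in K i.
Proof. by rewrite inE => /forallP. Qed.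

Lemma grid_set_coord x j y : x \in grid K -> y \in K j -> set_coord x j y \in grid K.
Proof.
move=> xG yK; rewrite inE; apply/forallP => i; rewrite ffunE.
by case: eqVneq => [->|_] //; apply: grid_coord.
Qed.

Definition nonzeros (L : seq (term F n)) : {set {ffun 'I_n -> F}} :=
  [set x in grid K | eval_terms L x != 0].

Definition footprint (L : seq (term F n)) (m d : nat) (B : 'I_n -> nat) (u : 'I_n -> nat)
  : Prop :=
  [/\ forall i, (u i <= (#|K i|).-1)%N, forall i, (u i <= B i)%N,
      forall i : 'I_n, (m <= i)%N -> u i = 0%N, (\sum_i u i <= d)%N &
      (\prod_i (#|K i| - u i) <= #|nonzeros L|)%N].

(* Without variables, L is a nonzero constant: it has no zero at all. *)
Lemma footprint_base L d B : vars_below 0 L -> nonzeros L != set0 ->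
  footprint L 0 d B (fun _ => 0%N).
Proof.
move=> L_const /set0Pn[x0]; rewrite inE => /andP[x0G x0_neq0].
split=> //; first by rewrite big1.
have evalE x : eval_terms L x = \sum_(p <- L) p.1.
  apply: eq_big_seq => p pL; rewrite big1 ?mulr1 // => i _.
  by have /forallP/(_ i) := allP L_const p pL; rewrite leq0n => /eqP ->; rewrite expr0.
under eq_bigr do rewrite subn0.
rewrite -card_box; apply: subset_leq_card; apply/subsetP => x xG.
by rewrite inE xG evalE -(evalE x0).
Qed.

Lemma top_coeff L (j : 'I_n) : nonzeros L != set0 ->
  exists2 ts, (ts < #|K j|)%N & nonzeros (coeff_terms L j #|K j| ts) != set0 /\
    forall t, (ts < t < #|K j|)%N -> nonzeros (coeff_terms L j #|K j| t) = set0.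
Proof.
move=> /set0Pn[x0]; rewrite inE => /andP[x0G x0_neq0].
pose P t := (t < #|K j|)%N && (nonzeros (coeff_terms L j #|K j| t) != set0).
have exP : exists t, P t.
  have [/existsP[t t_neq0]|] := boolP [exists t : 'I_#|K j|,
      eval_terms (coeff_terms L j #|K j| t) x0 != 0].
    by exists t; rewrite /P ltn_ord; apply/set0Pn; exists x0; rewrite inE x0G.
  rewrite negb_exists => /forallP all0; case/eqP: x0_neq0.
  rewrite (eval_terms_split L (K_ge2 j) (K_exp (grid_coord j x0G))) big1 // => t _.
  by rewrite (eqP (negbNE (all0 t))) mul0r.
have ubP t : P t -> (t <= #|K j|)%N by case/andP=> /ltnW.
have [ts /andP[ts_lt ts_nz] ts_max] := ex_maxnP exP ubP.
exists ts => //; split=> // t /andP[tst t_lt]; apply/eqP; apply: contraTT tst => t_nz.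
by rewrite -leqNgt; apply: ts_max; rewrite /P t_lt.
Qed.

(* Root count on every line through a nonzero of the top coefficient, then
   double counting: at most |K_j| - ts lines' worth of nonzeros are lost. *)
Lemma nonzeros_top_coeff L j ts : (ts < #|K j|)%N ->
  (forall t, (ts < t < #|K j|)%N -> nonzeros (coeff_terms L j #|K j| t) = set0) ->
  ((#|K j| - ts) * #|nonzeros (coeff_terms L j #|K j| ts)| <= #|nonzeros L| * #|K j|)%N.
Proof.
move=> ts_lt above0; set a := #|K j|; pose c t := coeff_terms L j a t.
have c_zero t x : (ts < t < a)%N -> x \in grid K -> eval_terms (c t) x = 0.
  move=> /above0 /setP /(_ x); rewrite !inE => + xG; rewrite xG /=.
  by move/negbT; rewrite negbK => /eqP.
apply: (double_count_lines (G := grid K) (Kj := K j) (j := j)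
  (P := fun z => eval_terms L z != 0)).
- by apply/subsetP => x; rewrite inE => /andP[].
- by move=> x y; apply: grid_set_coord.
- by move=> x; apply: grid_coord.
move=> x; rewrite inE => /andP[xG x_nz].
apply: (poly_nonzeros_ge (E := fun t => eval_terms (c t) x)) => // y yK.
have xyG := grid_set_coord xG yK.
rewrite (eval_terms_split L (K_ge2 j) (K_exp (grid_coord j xyG))) ffunE eqxx.
rewrite (eq_bigr (fun t : 'I_a => eval_terms (c t) x * y ^+ t)) => [|t _]; last first.
  congr (_ * _); apply: eval_terms_free (coeff_terms_free _ _ _ _) _ => i ij.
  by rewrite ffunE (negbTE ij).
rewrite (big_ord_widen a (fun t => eval_terms (c t) x * y ^+ t) ts_lt).
rewrite (bigID (fun t : 'I_a => (t < ts.+1)%N)) /= [X in _ + X]big1 ?addr0 // => t.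
by rewrite -leqNgt => ts_t; rewrite c_zero ?mul0r ?ts_t ?ltn_ord.
Qed.

Lemma footprint_step L m d B : (m < n)%N ->
  (forall L' d', vars_below m L' -> total_deg_le d' L' -> exps_le B L' ->
     nonzeros L' != set0 -> exists u, footprint L' m d' B u) ->
  vars_below m.+1 L -> total_deg_le d L -> exps_le B L -> nonzeros L != set0 ->
  exists u, footprint L m.+1 d B u.
Proof.
move=> mn IH L_vars L_deg L_exps L_nz.
set j : 'I_n := Ordinal mn; set a := #|K j|.
have [ts ts_lt [top_nz above0]] := top_coeff j L_nz.
have [q q_in] : exists q, q \in coeff_terms L j a ts.
  case/set0Pn: top_nz => x; rewrite inE.
  case: (coeff_terms L j a ts) => [|q ?]; first by rewrite eval_terms_nil eqxx andbF.
  by exists q; rewrite inE eqxx.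
have [p pL ts_p] := coeff_terms_exp q_in.
have ts_B : (ts <= B j)%N := leq_trans ts_p (forallP (allP L_exps p pL) j).
have ts_d : (ts <= d)%N.
  apply: leq_trans ts_p (leq_trans _ (allP L_deg p pL)).
  by rewrite (bigD1 j) //= leq_addr.
have [u [u_K u_B u_m u_sum u_card]] := IH _ (d - ts)%N
  (@coeff_terms_vars _ _ L j a ts m erefl L_vars) (@coeff_terms_deg _ _ L j a ts d L_deg)
  (@coeff_terms_exps _ _ L j a ts B L_exps) top_nz.
have uj0 : u j = 0%N by apply: u_m.
exists (fun i => if i == j then ts else u i); split.
- by move=> i; case: eqVneq => [->|_] //; rewrite -/a; lia.
- by move=> i; case: eqVneq => [->|_].
- move=> i mi; case: eqVneq => [ij|_]; last by apply: u_m; apply: ltnW.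
  by move: mi; rewrite ij ltnn.
- rewrite (bigD1 j) //= eqxx (eq_bigr u) => [|i /negbTE -> //].
  by move: u_sum; rewrite (bigD1 j) //= uj0; lia.
set P' := (\prod_(i | i != j) (#|K i| - u i))%N.
have prod_new : (\prod_i (#|K i| - (if i == j then ts else u i)) = (a - ts) * P')%N.
  by rewrite (bigD1 j) //= eqxx; congr (_ * _)%N; apply: eq_bigr => i /negbTE ->.
have prod_old : (\prod_i (#|K i| - u i) = P' * a)%N by rewrite (bigD1 j) //= uj0 subn0 mulnC.
have a_gt0 : (0 < a)%N by apply: leq_trans (K_ge2 j).
rewrite -(leq_pmul2r a_gt0) prod_new -mulnA.
apply: leq_trans (nonzeros_top_coeff ts_lt above0).
by rewrite leq_mul2l -prod_old u_card orbT.
Qed.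

Theorem footprint_exists L d B : total_deg_le d L -> exps_le B L -> nonzeros L != set0 ->
  exists u, footprint L n d B u.
Proof.
have all_vars : vars_below n L by apply/allP => p _; apply/forallP => i; rewrite leqNgt ltn_ord.
suff gen m : (m <= n)%N -> forall L d, vars_below m L -> total_deg_le d L -> exps_le B L ->
    nonzeros L != set0 -> exists u, footprint L m d B u.
  by move=> L_deg L_exps L_nz; apply: gen.
elim: m => [_ L' d' L_vars _ _ L_nz|m IH mn L' d'].
  by exists (fun _ => 0%N); apply: footprint_base.
by apply: footprint_step => //; apply: IH; apply: ltnW.
Qed.
End FootprintBound.

Definition terms_of (R : nzRingType) n (f : {mpoly R[n]}) : seq (term R n) :=
  [seq ((f@_m, [ffun i => m i]) : term R n) | m <- msupp f].

Lemma eval_terms_of (R : comNzRingType) n (f : {mpoly R[n]}) (x : 'I_n -> R) :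
  eval_terms (terms_of f) x = f.@[x].
Proof.
rewrite mevalE /eval_terms big_map; apply: eq_bigr => m _ /=; congr (_ * _).
by apply: eq_bigr => i _; rewrite ffunE.
Qed.

Lemma mpoly_footprint (F : finFieldType) n (K : 'I_n -> {set F}) :
  (forall i x, x \in K i -> x ^+ #|K i| = x) -> (forall i, 2 <= #|K i|)%N ->
  forall (f : {mpoly F[n]}) d, (msize f <= d.+1)%N ->
  [set x in grid K | f.@[x] != 0] != set0 ->
  exists u : 'I_n -> nat, [/\ forall i, (u i <= (#|K i|).-1)%N,
     forall i, (u i <= degX i f)%N, (\sum_i u i <= d)%N &
     (\prod_i (#|K i| - u i) <= #|[set x in grid K | f.@[x] != 0%R]|)%N].
Proof.
move=> K_exp K_ge2 f d f_deg f_nz.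
have nzE : nonzeros K (terms_of f) = [set x in grid K | f.@[x] != 0].
  by apply/setP => x; rewrite !inE eval_terms_of.
have [|||u [u_K u_deg _ u_sum u_card]] := footprint_exists K_exp K_ge2 (d := d)
  (B := fun i => degX i f) (L := terms_of f).
- apply/allP => p /mapP[m m_supp ->] /=.
  have := msize_mdeg_lt m_supp; rewrite mdegE.
  rewrite (eq_bigr (fun i => m i)) => [m_deg|i _]; last by rewrite ffunE.
  by rewrite -ltnS (leq_trans m_deg f_deg).
- apply/allP => p /mapP[m m_supp ->]; apply/forallP => i /=; rewrite ffunE.
  exact: (@leq_bigmax_seq _ _ xpredT (fun m : 'X_{1..n} => m i) m m_supp isT).
- by rewrite nzE.
by exists u; rewrite -nzE.
Qed.

Lemma hweight_Psi (F : finFieldType) n (K : 'I_n -> {set F}) (f : {mpoly F[n]}) :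
  hweight (Psi K f) = #|[set x in grid K | f.@[x] != 0]|.
Proof.
rewrite /hweight -(card_imset _ enum_val_inj); apply: eq_card => x.
apply/imsetP/idP => [[j + ->]|].
  by rewrite !inE mxE => ->; rewrite andbT; have := enum_valP j; rewrite inE.
rewrite inE => /andP[xG fx]; exists (enum_rank_in xG x); last by rewrite enum_rankK_in.
by rewrite !inE mxE enum_rankK_in.
Qed.

Lemma hweight_eq0 (F : fieldType) m (v : 'rV[F]_m) : (hweight v == 0%N) = (v == 0).
Proof.
rewrite /hweight cards_eq0; apply/eqP/eqP => [supp0|->]; last first.
  by apply/setP => j; rewrite !inE mxE eqxx.
apply/rowP => j; rewrite mxE; apply/eqP/negPn/negP => vj.
have : j \in [set j | v 0 j != 0] by rewrite inE.
by rewrite supp0 inE.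
Qed.

Lemma Psi0 (F : finFieldType) n (K : 'I_n -> {set F}) : Psi K 0 = 0.
Proof. by apply/rowP => j; rewrite !mxE meval0. Qed.

Lemma msizeM_leq (R : idomainType) n (p q : {mpoly R[n]}) :
  (msize (p * q) <= (msize p + msize q).-1)%N.
Proof.
have [->|p_neq0] := eqVneq p 0; first by rewrite mul0r msize0.
have [->|q_neq0] := eqVneq q 0; first by rewrite mulr0 msize0.
by rewrite msizeM.
Qed.

Lemma msize_prod_leq (R : idomainType) n (I : Type) (r : seq I) (P : pred I)
  (G : I -> {mpoly R[n]}) :
  (msize (\prod_(i <- r | P i) G i) <= (\sum_(i <- r | P i) (msize (G i)).-1).+1)%N.
Proof.
elim: r => [|i r IH]; first by rewrite !big_nil msize1.
rewrite !big_cons; case: (P i) => //.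
by apply: leq_trans (msizeM_leq _ _) _; lia.
Qed.

Definition vanishing_poly (F : finFieldType) n (i : 'I_n) (A : {set F}) : {mpoly F[n]} :=
  \prod_(c in A) ('X_i - c%:MP).

Lemma msize_vanishing_poly (F : finFieldType) n (i : 'I_n) (A : {set F}) :
  (msize (vanishing_poly i A) <= #|A|.+1)%N.
Proof.
apply: leq_trans (msize_prod_leq _ _ _) _.
rewrite ltnS -sum1_card leq_sum // => c _.
have lin : (msize ('X_i - c%:MP : {mpoly F[n]}) <= 2)%N.
  apply: leq_trans (msizeD_le _ _) _; rewrite msizeN msizeX mdeg1 geq_max leqnn msizeC.
  by case: (c != 0).
by rewrite -subn1 leq_subLR.
Qed.

Lemma meval_vanishing_poly (F : finFieldType) n (i : 'I_n) (A : {set F}) (x : 'I_n -> F) :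
  ((vanishing_poly i A).@[x] != 0) = (x i \notin A).
Proof.
rewrite /vanishing_poly (big_morph _ (mevalM x) (meval1 x)).
apply/prodf_neq0/idP => [all_nz|xA c cA]; last first.
  by rewrite mevalB mevalXU mevalC subr_eq0; apply: contraNneq xA => ->.
by apply/negP => xA; have := all_nz _ xA; rewrite mevalB mevalXU mevalC subrr eqxx.
Qed.

Section ProfileWord.
Variables (F : finFieldType) (n : nat) (K : 'I_n -> {set F}) (k : 'I_n) (A : {set F}).
Hypothesis K0 : forall i, 0 \in K i.
Hypothesis A_sub : A \subset K k.

(* The candidate minimum weight word of C_X(d): it is nonzero exactly when
   x_i = 0 for i < k and x_k lies outside A. *)
Definition profile_poly : {mpoly F[n]} :=
  (\prod_(i < n | (i < k)%N) vanishing_poly i (K i :\ 0)) * vanishing_poly k A.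

Definition profile_box (i : 'I_n) : {set F} :=
  if (i < k)%N then [set 0] else if i == k then K k :\: A else K i.

Lemma msize_profile_poly :
  (msize profile_poly <= (\sum_(i < n | (i < k)%N) (#|K i| - 1) + #|A|).+1)%N.
Proof.
apply: leq_trans (msizeM_leq _ _) _.
have frozen : (msize (\prod_(i < n | (i < k)%N) vanishing_poly i (K i :\ 0)) <=
    (\sum_(i < n | (i < k)%N) (#|K i| - 1)).+1)%N.
  apply: leq_trans (msize_prod_leq _ _ _) _; rewrite ltnS leq_sum // => i _.
  rewrite -!subn1 leq_sub2r //; apply: leq_trans (msize_vanishing_poly _ _) _.
  by rewrite (cardsD1 0 (K i)) K0.
rewrite -subn1 leq_subLR; apply: leq_trans (leq_add frozen (msize_vanishing_poly k A)) _.
by rewrite addSn addnS add1n.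
Qed.

Lemma profile_poly_support :
  [set x in grid K | profile_poly.@[x] != 0] =
  [set x : {ffun 'I_n -> F} | [forall i, x i \in profile_box i]].
Proof.
apply/setP => x; rewrite !inE mevalM mulf_eq0 negb_or meval_vanishing_poly.
rewrite (big_morph _ (mevalM x) (meval1 x)) prodf_seq_neq0.
apply/idP/forallP => [/and3P[/forallP xG /allP frozen xA] i|x_box].
  rewrite /profile_box; case: ifP => ik.
    have := frozen i (mem_index_enum i); rewrite ik meval_vanishing_poly !inE xG andbT.
    by rewrite negbK.
  by case: (eqVneq i k) => [->|_]; rewrite ?in_setD ?xA ?xG.
have x_in i : x i \in K i.
  have := x_box i; rewrite /profile_box; case: ifP => _; first by rewrite inE => /eqP ->.
  by case: (eqVneq i k) => [->|_] // /setDP[].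
apply/and3P; split; first by apply/forallP.
  apply/allP => i _; apply/implyP => ik; rewrite meval_vanishing_poly !inE x_in andbT negbK.
  by have := x_box i; rewrite /profile_box ik inE.
by have := x_box k; rewrite /profile_box ltnn eqxx => /setDP[].
Qed.

Lemma hweight_profile_poly : hweight (Psi K profile_poly) =
  (\prod_(i < n) (if (i < k)%N then 1 else if i == k then #|K k| - #|A| else #|K i|))%N.
Proof.
rewrite hweight_Psi profile_poly_support card_box; apply: eq_bigr => i _.
rewrite /profile_box; case: ifP => _; first by rewrite cards1.
by case: (eqVneq i k) => [_|_] //; rewrite cardsD (setIidPr A_sub).
Qed.
End ProfileWord.

Lemma weight_gap n (a u : 'I_n -> nat) (k s : 'I_n) l delta :
  (forall i j : 'I_n, (i <= j)%N -> (a i <= a j)%N) -> (forall i, (2 <= a i)%N) ->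
  (0 < l)%N -> (l <= a k - 1)%N -> (2 <= delta)%N -> (delta <= a s)%N ->
  ~~ [exists j : 'I_n, (val j == k.+1) && (a j <= a s)%N] ->
  ~~ [&& a s <= a k, a k - l <= a s & a s - (a k - l) < a s - delta + 1]%N ->
  (forall i, u i <= (a i).-1)%N -> (u s <= a s - delta)%N ->
  (\sum_(i < n) u i <= \sum_(i < n | (i < k)%N) (a i - 1) + l)%N ->
  (\prod_(i < n) (if (i < k)%N then 1 else if i == k then a k - l else a i)
   < \prod_(i < n) (a i - u i))%N.
Proof.
move=> a_mono a_ge2 l_gt0 l_le delta_ge2 delta_le not_i not_ii u_le us_le sum_le.
pose a' (i : nat) := a (insubd k i); pose u' (i : nat) := u (insubd k i).
have a'E (i : 'I_n) : a' i = a i by rewrite /a' valKd.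
have u'E (i : 'I_n) : u' i = u i by rewrite /u' valKd.
have lhsE : (\prod_(i < n) (if (i < k)%N then 1 else if i == k then a k - l else a i) =
    \prod_(0 <= i < n) (if (i < k)%N then 1 else if i == k then a' k - l else a' i))%N.
  by rewrite big_mkord; apply: eq_bigr => i _; rewrite !a'E val_eqE.
have rhsE : (\prod_(i < n) (a i - u i) = \prod_(0 <= i < n) (a' i - u' i))%N.
  by rewrite big_mkord; apply: eq_bigr => i _; rewrite a'E u'E.
have a'i_ge2 i : (i < n)%N -> (2 <= a' i)%N by move=> _; apply: a_ge2.
rewrite lhsE rhsE; apply: (@profile_prod_lt a' u' n k s l delta) => //.
- move=> i j ij jn; apply: a_mono; rewrite !val_insubd jn.
  by case: ifP => // /negbT; lia.
- by rewrite a'E; lia.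
- by rewrite a'E.
- case=> kn a_next; case/existsP: not_i; exists (Ordinal kn).
  by rewrite eqxx -a'E -[in a s]a'E.
- by rewrite !a'E => /and3P; apply/negP: not_ii.
- by move=> i _; apply: u_le.
- by rewrite u'E a'E.
- rewrite big_mkord (eq_bigr u) => [|i _]; last by rewrite u'E.
  apply: leq_trans sum_le _; rewrite leq_add2r.
  rewrite (big_nat_widen 0 k n) ?(ltnW (ltn_ord k)) // big_mkord.
  by apply: eq_leq; apply: eq_bigr => i _; rewrite a'E subn1.
Qed.

(* A nonzero word of D_X(d) satisfies the footprint bound with the extra
   constraint u_s <= |K_s| - delta coming from deg_{X_s} f < |K_s| - delta + 1. *)
Lemma D_word_weight_ge (F : finFieldType) n (K : 'I_n -> {set F}) delta (s : 'I_n) d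
  (f : {mpoly F[n]}) :
  (forall i, is_subfield (K i)) -> Pdelta K delta s d f -> Psi K f != 0 ->
  exists u : 'I_n -> nat, [/\ forall i, (u i <= (#|K i|).-1)%N, (u s <= #|K s| - delta)%N,
    (\sum_i u i <= d)%N & (\prod_i (#|K i| - u i) <= hweight (Psi K f))%N].
Proof.
move=> K_sub [f_deg f_s] c_nz.
have f_nz : [set x in grid K | f.@[x] != 0] != set0.
  by rewrite -cards_eq0 -hweight_Psi hweight_eq0.
have K_exp i := subfield_expE (K_sub i); have K_ge2 i := subfield_card_ge2 (K_sub i).
have [u [u_K u_deg u_sum u_card]] := mpoly_footprint K_exp K_ge2 f_deg f_nz.
exists u; split => //; last by rewrite hweight_Psi.
have : (degX s f < #|K s| - delta + 1)%N.
  by case: f_s => // f0; move: c_nz; rewrite f0 Psi0 eqxx.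
by have := u_deg s; lia.
Qed.

(* C_X(d) contains a nonzero word of weight (|K_k| - l) \prod_(i > k) |K_i|:
   the profile polynomial for any l points A of K_k. *)
Lemma C_profile_word (F : finFieldType) n (K : 'I_n -> {set F}) (k : 'I_n) l :
  (forall i, is_subfield (K i)) -> (l < #|K k|)%N ->
  exists c, [/\ @code F n K (@Pdeg F n (\sum_(i < n | (i < k)%N) (#|K i| - 1) + l)) c, c != 0 &
    hweight c =
      (\prod_(i < n) (if (i < k)%N then 1 else if i == k then #|K k| - l else #|K i|))%N].
Proof.
move=> K_sub l_lt; have K0 i : 0 \in K i by case: (K_sub i).
set A := [set x in take l (enum (K k))].
have card_A : #|A| = l.
  by rewrite cardsE (card_uniqP (take_uniq _ (enum_uniq _))) size_takel // -cardE ltnW.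
have A_sub : A \subset K k by apply/subsetP => x; rewrite inE => /mem_take; rewrite mem_enum.
exists (Psi K (profile_poly K k A)); split.
- by exists (profile_poly K k A); split => //; rewrite /Pdeg -card_A msize_profile_poly.
- rewrite -hweight_eq0 hweight_profile_poly // -lt0n; apply: prodn_gt0 => i.
  rewrite card_A; case: ifP => // _; case: ifP => _; rewrite ?subn_gt0 //.
  exact: leq_trans (subfield_card_ge2 (K_sub i)).
- by rewrite hweight_profile_poly // card_A.
Qed.

Theorem mainTheorem10 (F : finFieldType) (n : nat) (K : 'I_n -> {set F})
  (delta : nat) (s k : 'I_n) (l d : nat) :
  (2 <= n)%N ->
  (forall i, is_subfield (K i)) ->
  (forall i j : 'I_n, (i <= j)%N -> K i \subset K j) ->
  (2 <= delta)%N ->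
  (* r := d_s - delta + 1 >= 1 *) (delta <= #|K s|)%N ->
  (0 < l)%N -> (l <= #|K k| - 1)%N ->
  d = (\sum_(i < n | (i < k)%N) (#|K i| - 1) + l)%N ->
  (exists w, min_dist (@code F n K (Pdelta K delta s d)) w /\
             min_dist (@code F n K (@Pdeg F n d)) w) ->
  (exists j : 'I_n, val j = k.+1 /\ (#|K j| <= #|K s|)%N) \/
  [/\ (#|K s| <= #|K k|)%N, (#|K k| - l <= #|K s|)%N &
      (#|K s| - (#|K k| - l) < #|K s| - delta + 1)%N].
Proof.
move=> _ K_sub K_nested delta_ge2 delta_le l_gt0 l_le d_def.
case=> w [[[_ [[f [f_D <-]] c_nz <-]] _] [_ C_min]].
have [/existsP[j /andP[/eqP jk j_s]]|not_i] :=
  boolP [exists j : 'I_n, (val j == k.+1) && (#|K j| <= #|K s|)%N]; first by left; exists j.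
have [/and3P alt_ii|not_ii] := boolP [&& #|K s| <= #|K k|, #|K k| - l <= #|K s| &
  #|K s| - (#|K k| - l) < #|K s| - delta + 1]%N; first by right.
exfalso.
(* the minimum weight word of D is heavier than the profile word of C *)
have [u [u_K us_le u_sum u_card]] := D_word_weight_ge K_sub f_D c_nz.
have l_lt : (l < #|K k|)%N by have := subfield_card_ge2 (K_sub k); lia.
have [c0 [c0_C c0_nz c0_w]] := C_profile_word K_sub l_lt.
rewrite -d_def in c0_C; rewrite d_def in u_sum.
have gap := @weight_gap n (fun i => #|K i|) u k s l delta
  (fun i j ij => subset_leq_card (K_nested i j ij)) (fun i => subfield_card_ge2 (K_sub i))
  l_gt0 l_le delta_ge2 delta_le not_i not_ii u_K us_le u_sum.
have := leq_trans u_card (C_min c0 c0_C c0_nz).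
by rewrite c0_w => /leq_ltn_trans/(_ gap); rewrite ltnn.
Qed.
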